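(* Let $X_0,X_1,\ldots$ be a stationary mean-zero Gaussian sequence with covariance $\Gamma(k)=\mathrm{E}[X_0X_k]$, $\Gamma(0)=1$, having a spectral density $f$ (so $\Gamma(k)=\int_{-\pi}^{\pi}e^{-ik\phi}f(\phi)\,d\phi$) which is continuous and strictly positive on $[-\pi,\pi]$. Let $K=K_n$ be real numbers with $K=o\!\left(\sqrt{n/\log\log n}\right)$. With $$A(x)=\sum_{k=0}^{n}\sum_{j=0}^{n}\Gamma(k-j)x^{k+j},\quad B(x)=\sum_{k=0}^{n}\sum_{j=0}^{n}\Gamma(k-j)\,k\,x^{k+j-1},\quad C(x)=\sum_{k=0}^{n}\sum_{j=0}^{n}\Gamma(k-j)\,kj\,x^{k+j-2},$$ and $$F_2(x)=\frac{1}{\pi}\,\frac{\sqrt{2}\,|B(x)K|}{A(x)^{3/2}}\exp\!\left(-\frac{K^2}{2A(x)}\right)\mathrm{erf}\!\left(\frac{|B(x)K|}{\sqrt{2A(x)\left(A(x)C(x)-B(x)^2\right)}}\right),$$ we have, as $n\to\infty$, $$\int_1^{\infty}F_2(x)\,dx=o(1)\quad\text{and}\quad\int_{-\infty}^{-1}F_2(x)\,dx=o(1).$$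
   Context: $\mathrm{erf}(u)=\frac{2}{\sqrt{\pi}}\int_0^u e^{-t^2}dt$. *)

From Stdlib Require Import Reals Lra.
From Coquelicot Require Import Coquelicot.
Open Scope R_scope.

Definition erf (u : R) : R :=
  2 / sqrt PI * RInt (fun t => exp (- t ^ 2)) 0 u.

Definition Afun (Gam : Z -> R) (n : nat) (x : R) : R :=
  sum_f_R0 (fun k => sum_f_R0 (fun j =>
    Gam (Z.of_nat k - Z.of_nat j)%Z * x ^ (k + j)) n) n.

(* B(x) = sum sum Gamma(k-j) k x^(k+j-1); the k = 0 terms vanish,
   so truncated nat subtraction is harmless. *)
Definition Bfun (Gam : Z -> R) (n : nat) (x : R) : R :=
  sum_f_R0 (fun k => sum_f_R0 (fun j =>
    Gam (Z.of_nat k - Z.of_nat j)%Z * INR k * x ^ (k + j - 1)) n) n.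

(* C(x) = sum sum Gamma(k-j) k j x^(k+j-2); terms with k = 0 or j = 0
   vanish, so truncated nat subtraction is harmless. *)
Definition Cfun (Gam : Z -> R) (n : nat) (x : R) : R :=
  sum_f_R0 (fun k => sum_f_R0 (fun j =>
    Gam (Z.of_nat k - Z.of_nat j)%Z * INR k * INR j * x ^ (k + j - 2)) n) n.

Definition F2 (Gam : Z -> R) (n : nat) (K : R) (x : R) : R :=
  let A := Afun Gam n x in
  let B := Bfun Gam n x in
  let C := Cfun Gam n x in
  (1 / PI) * (sqrt 2 * Rabs (B * K) / Rpower A (3 / 2))
  * exp (- (K ^ 2) / (2 * A))
  * erf (Rabs (B * K) / sqrt (2 * A * (A * C - B ^ 2))).

From Stdlib Require Import Reals Lra Lia Classical.
From Coquelicot Require Import Coquelicot.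
Open Scope R_scope.

(* With u = (x^k)_k and v = (k x^(k-1))_k, the functions A, B and C are the values at
   (u,u), (v,u) and (v,v) of the Toeplitz form Q(a,b) = sum_{k,j} Gamma(k-j) a_k b_j.
   Since Q(a,a) is the integral of |sum_k a_k e^{ik phi}|^2 against the spectral density,
   Parseval gives 2 pi m |a|^2 <= Q(a,a) <= 2 pi M |a|^2 with m, M the extrema of the
   density; in particular B^2 < A C, so F2 is continuous. Bounding erf by sqrt pi, the
   exponential by 1 and |B| by sqrt(A C), for |x| >= 1 one gets
   F2(x) <= const |K| |v| / |u|^2 <= const |K| n / |u| <= const |K| sqrt n / |x|^(n/2),
   using |v| <= n |u| and AM-GM in the form |u|^2 >= (n+1) |x|^n. Integrating over
   |x| >= 1 gives O(|K| / sqrt n), which is o(1) since K = o(sqrt n). *)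

Lemma continuous_Rplus (f g : R -> R) x :
  continuous f x -> continuous g x -> continuous (fun y => f y + g y) x.
Proof. exact (continuous_plus f g x). Qed.

Lemma continuous_Ropp (f : R -> R) x :
  continuous f x -> continuous (fun y => - f y) x.
Proof. exact (continuous_opp f x). Qed.

Lemma continuous_Rminus (f g : R -> R) x :
  continuous f x -> continuous g x -> continuous (fun y => f y - g y) x.
Proof. intros; apply continuous_Rplus; [|apply continuous_Ropp]; assumption. Qed.

Lemma continuous_Rmult (f g : R -> R) x :
  continuous f x -> continuous g x -> continuous (fun y => f y * g y) x.
Proof. exact (continuous_mult f g x). Qed.

Lemma continuous_Rdiv (f g : R -> R) x :
  continuous f x -> continuous g x -> g x <> 0 -> continuous (fun y => f y / g y) x.
Proof. intros; apply continuous_Rmult; [|apply continuous_Rinv_comp]; assumption. Qed.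

Lemma continuous_Rpow (f : R -> R) x k :
  continuous f x -> continuous (fun y => f y ^ k) x.
Proof.
  intros Hf; induction k; simpl; [apply continuous_const|].
  now apply continuous_Rmult.
Qed.

Lemma continuous_sum_f_R0 (h : nat -> R -> R) x n :
  (forall k, continuous (h k) x) -> continuous (fun y => sum_f_R0 (fun k => h k y) n) x.
Proof. intros H; induction n; simpl; [|apply continuous_Rplus]; auto. Qed.

Ltac solve_continuous :=
  repeat match goal with
  | |- forall _ : nat, _ => intros ?; cbv beta
  | |- continuous (fun _ => ?c) _ => apply continuous_const
  | |- continuous (fun y => y) _ => apply continuous_id
  | |- continuous (Rplus _) _ => apply (continuous_Rplus (fun _ => _) (fun y => y))
  | |- continuous (Rminus _) _ => apply (continuous_Rminus (fun _ => _) (fun y => y))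
  | |- continuous (Rmult _) _ => apply (continuous_Rmult (fun _ => _) (fun y => y))
  | |- continuous (fun _ => _ + _) _ => apply continuous_Rplus
  | |- continuous (fun _ => _ - _) _ => apply continuous_Rminus
  | |- continuous (fun _ => - _) _ => apply continuous_Ropp
  | |- continuous (fun _ => _ * _) _ => apply continuous_Rmult
  | |- continuous (fun _ => _ / _) _ => apply continuous_Rdiv
  | |- continuous (fun _ => _ ^ _) _ => apply continuous_Rpow
  | |- continuous (fun _ => sum_f_R0 _ _) _ => apply continuous_sum_f_R0
  | |- continuous (fun _ => exp _) _ => apply continuous_exp_comp
  | |- continuous (fun _ => cos _) _ => apply continuous_cos_comp
  | |- continuous (fun _ => sin _) _ => apply continuous_sin_comp
  | |- continuous (fun _ => Rabs _) _ => apply continuous_Rabs_comp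
  | |- continuous (fun _ => sqrt _) _ => apply continuous_sqrt_comp
  end.

Lemma ex_RInt_sum_f_R0 (h : nat -> R -> R) a b n :
  (forall k, ex_RInt (h k) a b) -> ex_RInt (fun y => sum_f_R0 (fun k => h k y) n) a b.
Proof.
  intros H; induction n; simpl; [|apply (ex_RInt_plus (V := R_NormedModule))]; auto.
Qed.

Lemma RInt_sum_f_R0 (h : nat -> R -> R) a b n :
  (forall k, ex_RInt (h k) a b) ->
  RInt (fun y => sum_f_R0 (fun k => h k y) n) a b = sum_f_R0 (fun k => RInt (h k) a b) n.
Proof.
  intros H; induction n; simpl; [reflexivity|].
  rewrite <- IHn; apply (RInt_plus (V := R_CompleteNormedModule)); auto.
  now apply ex_RInt_sum_f_R0.
Qed.

Lemma RInt_Rmult_l (h : R -> R) a b c :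
  ex_RInt h a b -> RInt (fun y => c * h y) a b = c * RInt h a b.
Proof. exact (RInt_scal (V := R_CompleteNormedModule) h a b c). Qed.

Lemma sum_f_R0_delta n i c : (i <= n)%nat ->
  sum_f_R0 (fun k => if Nat.eq_dec i k then c else 0) n = c.
Proof.
  intros Hi; induction n as [|n IH]; simpl.
  - replace i with 0%nat by lia; destruct Nat.eq_dec; [reflexivity|lia].
  - destruct (Nat.eq_dec i (S n)) as [->|].
    + rewrite (sum_eq _ (fun _ => 0)), sum_cte; [ring|].
      intros k Hk; destruct Nat.eq_dec; [lia|reflexivity].
    + rewrite IH by lia; ring.
Qed.

Lemma sum_f_R0_ge_term (h : nat -> R) n i :
  (forall k, (k <= n)%nat -> 0 <= h k) -> (i <= n)%nat -> h i <= sum_f_R0 h n.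
Proof.
  intros H Hi; rewrite <- (sum_f_R0_delta n i (h i) Hi).
  apply sum_Rle; intros k Hk; destruct Nat.eq_dec as [->|]; [lra|auto].
Qed.

Lemma sum_f_R0_rev (a : nat -> R) n : sum_f_R0 (fun k => a (n - k)%nat) n = sum_f_R0 a n.
Proof.
  revert a; induction n as [|n IH]; intros a; [reflexivity|].
  rewrite decomp_sum by lia; simpl pred.
  rewrite (sum_eq _ (fun k => a (n - k)%nat)) by (intros; reflexivity).
  rewrite IH; simpl; ring.
Qed.

Definition sqnorm n (a : nat -> R) := sum_f_R0 (fun k => a k ^ 2) n.
Definition cos_poly n (a : nat -> R) (p : R) := sum_f_R0 (fun k => a k * cos (INR k * p)) n.
Definition sin_poly n (a : nat -> R) (p : R) := sum_f_R0 (fun k => a k * sin (INR k * p)) n.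

Lemma double_sum_cos_diff n a b p :
  sum_f_R0 (fun k => sum_f_R0 (fun j => a k * b j * cos ((INR k - INR j) * p)) n) n
  = cos_poly n a p * cos_poly n b p + sin_poly n a p * sin_poly n b p.
Proof.
  rewrite (sum_eq _ (fun k => a k * cos (INR k * p) * cos_poly n b p
                             + a k * sin (INR k * p) * sin_poly n b p)).
  - rewrite plus_sum, <- (scal_sum _ _ (cos_poly n b p)), <- (scal_sum _ _ (sin_poly n b p)).
    unfold cos_poly, sin_poly; ring.
  - intros k _; unfold cos_poly, sin_poly; rewrite !scal_sum, <- plus_sum.
    apply sum_eq; intros j _.
    replace ((INR k - INR j) * p) with (INR k * p - INR j * p) by ring.
    rewrite cos_minus; ring.
Qed.

Lemma ex_RInt_cos_mul (w : R -> R) d : (forall x, continuous w x) ->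
  ex_RInt (fun p => cos (d * p) * w p) (-PI) PI.
Proof.
  intros Hw; apply (ex_RInt_continuous (V := R_CompleteNormedModule)); intros z _.
  solve_continuous; auto.
Qed.

Lemma RInt_double_sum_cos_diff (w : R -> R) n a b : (forall x, continuous w x) ->
  sum_f_R0 (fun k => sum_f_R0 (fun j =>
     a k * b j * RInt (fun p => cos ((INR k - INR j) * p) * w p) (-PI) PI) n) n
  = RInt (fun p => (cos_poly n a p * cos_poly n b p + sin_poly n a p * sin_poly n b p) * w p)
      (-PI) PI.
Proof.
  intros Hw.
  rewrite (RInt_ext _ (fun p => sum_f_R0 (fun k => sum_f_R0 (fun j =>
      a k * b j * (cos ((INR k - INR j) * p) * w p)) n) n)).
  2:{ intros p _; rewrite <- double_sum_cos_diff, Rmult_comm, scal_sum.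
      apply sum_eq; intros k _; rewrite Rmult_comm, scal_sum; apply sum_eq; intros j _; ring. }
  assert (Hex : forall k j, ex_RInt (fun p => a k * b j * (cos ((INR k - INR j) * p) * w p))
                  (-PI) PI).
  { intros k j; apply (ex_RInt_scal (V := R_NormedModule)), ex_RInt_cos_mul, Hw. }
  rewrite RInt_sum_f_R0 by (intros; apply ex_RInt_sum_f_R0; auto).
  apply sum_eq; intros k _; rewrite RInt_sum_f_R0 by auto.
  apply sum_eq; intros j _; rewrite RInt_Rmult_l; [reflexivity|].
  now apply ex_RInt_cos_mul.
Qed.

Lemma RInt_cos_nat_diff k j :
  RInt (fun p => cos ((INR k - INR j) * p)) (-PI) PI = if Nat.eq_dec k j then 2 * PI else 0.
Proof.
  destruct (Nat.eq_dec k j) as [<-|ne].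
  - rewrite (RInt_ext _ (fun _ => 1)), RInt_const.
    + unfold scal; simpl; unfold mult; simpl; ring.
    + intros p _; rewrite Rminus_diag, Rmult_0_l; apply cos_0.
  - set (d := INR k - INR j).
    assert (dz : d <> 0) by (intro E; apply ne, INR_eq; unfold d in E; lra).
    (* d is a nonzero integer, so sin (d p) / d is an antiderivative vanishing at +-PI *)
    assert (E : minus (sin (d * PI) / d) (sin (d * - PI) / d) = 0).
    { assert (Z : forall z : Z, sin (IZR z * PI) = 0) by (intros; apply sin_eq_0_1; eauto).
      assert (Ed : d = IZR (Z.of_nat k - Z.of_nat j))
        by (unfold d; rewrite minus_IZR, <- !INR_IZR_INZ; reflexivity).
      replace (d * - PI) with (IZR (- (Z.of_nat k - Z.of_nat j)) * PI)
        by (rewrite opp_IZR, <- Ed; ring).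
      rewrite Ed, Z, Z; unfold minus, plus, opp; simpl; unfold Rdiv; ring. }
    apply is_RInt_unique; rewrite <- E.
    apply (is_RInt_derive (fun p => sin (d * p) / d)).
    + intros p _; auto_derive; [exact I | field; exact dz].
    + intros p _; solve_continuous.
Qed.

Lemma RInt_trig_poly_sq n a :
  RInt (fun p => cos_poly n a p * cos_poly n a p + sin_poly n a p * sin_poly n a p) (-PI) PI
  = 2 * PI * sqnorm n a.
Proof.
  rewrite (RInt_ext _ (fun p => (cos_poly n a p * cos_poly n a p
                                 + sin_poly n a p * sin_poly n a p) * 1))
    by (intros; symmetry; apply Rmult_1_r).
  rewrite <- RInt_double_sum_cos_diff by (intros; apply continuous_const).
  unfold sqnorm; rewrite scal_sum; apply sum_eq; intros k Hk.
  rewrite <- (sum_f_R0_delta n k (a k ^ 2 * (2 * PI)) Hk).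
  apply sum_eq; intros j _.
  rewrite (RInt_ext _ (fun p => cos ((INR k - INR j) * p))) by (intros; apply Rmult_1_r).
  rewrite RInt_cos_nat_diff; destruct Nat.eq_dec as [<-|]; ring.
Qed.

Lemma RInt_mul_weight_bounds (E w : R -> R) a b m M : a <= b ->
  ex_RInt E a b -> ex_RInt (fun p => E p * w p) a b ->
  (forall p, a <= p <= b -> 0 <= E p /\ m <= w p <= M) ->
  m * RInt E a b <= RInt (fun p => E p * w p) a b <= M * RInt E a b.
Proof.
  intros Hab HE HEw Hb.
  rewrite <- !RInt_Rmult_l by exact HE.
  split; apply RInt_le; auto;
    try (apply (ex_RInt_scal (V := R_NormedModule)); exact HE);
    intros p Hp; destruct (Hb p) as [HE0 [Hm HM]]; nra.
Qed.

Lemma sum_f_R0_sub_scal (f h : nat -> R) t n :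
  sum_f_R0 (fun k => f k - t * h k) n = sum_f_R0 f n - t * sum_f_R0 h n.
Proof. induction n as [|n IH]; simpl; [|rewrite IH]; ring. Qed.

Definition toeplitz_form (Gam : Z -> R) n (a b : nat -> R) :=
  sum_f_R0 (fun k => sum_f_R0 (fun j => Gam (Z.of_nat k - Z.of_nat j)%Z * a k * b j) n) n.

Lemma toeplitz_form_sub_scal_l Gam n a b c t :
  toeplitz_form Gam n (fun k => a k - t * b k) c
  = toeplitz_form Gam n a c - t * toeplitz_form Gam n b c.
Proof.
  unfold toeplitz_form; rewrite <- sum_f_R0_sub_scal; apply sum_eq; intros k _.
  rewrite <- sum_f_R0_sub_scal; apply sum_eq; intros j _; ring.
Qed.

Lemma toeplitz_form_sub_scal_r Gam n a b c t :
  toeplitz_form Gam n c (fun k => a k - t * b k)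
  = toeplitz_form Gam n c a - t * toeplitz_form Gam n c b.
Proof.
  unfold toeplitz_form; rewrite <- sum_f_R0_sub_scal; apply sum_eq; intros k _.
  rewrite <- sum_f_R0_sub_scal; apply sum_eq; intros j _; ring.
Qed.

Definition monomials (x : R) (k : nat) := x ^ k.
Definition dmonomials (x : R) (k : nat) := INR k * x ^ (k - 1).

Lemma Afun_toeplitz Gam n x : Afun Gam n x = toeplitz_form Gam n (monomials x) (monomials x).
Proof.
  apply sum_eq; intros k _; apply sum_eq; intros j _.
  unfold monomials; rewrite pow_add; ring.
Qed.

Lemma Bfun_toeplitz Gam n x : Bfun Gam n x = toeplitz_form Gam n (dmonomials x) (monomials x).
Proof.
  apply sum_eq; intros k _; apply sum_eq; intros j _.
  unfold monomials, dmonomials; destruct k as [|k]; [simpl; ring|].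
  replace (S k + j - 1)%nat with (k + j)%nat by lia.
  replace (S k - 1)%nat with k by lia; rewrite pow_add; ring.
Qed.

Lemma Cfun_toeplitz Gam n x :
  Cfun Gam n x = toeplitz_form Gam n (dmonomials x) (dmonomials x).
Proof.
  apply sum_eq; intros k _; apply sum_eq; intros j _.
  unfold dmonomials; destruct k as [|k]; [simpl; ring|]; destruct j as [|j]; [simpl; ring|].
  replace (S k + S j - 2)%nat with (k + j)%nat by lia.
  replace (S k - 1)%nat with k by lia; replace (S j - 1)%nat with j by lia.
  rewrite pow_add; ring.
Qed.

Lemma sqnorm_ge_coord n a k : (k <= n)%nat -> a k ^ 2 <= sqnorm n a.
Proof. intros; apply (sum_f_R0_ge_term (fun i => a i ^ 2)); auto; intros; apply pow2_ge_0. Qed.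

Lemma sqnorm_monomials_ge_1 n x : 1 <= sqnorm n (monomials x).
Proof.
  replace 1 with (monomials x 0 ^ 2) by (unfold monomials; simpl; ring).
  apply sqnorm_ge_coord; lia.
Qed.

Lemma sqnorm_dmonomials_ge_1 n x : (1 <= n)%nat -> 1 <= sqnorm n (dmonomials x).
Proof.
  intros Hn; replace 1 with (dmonomials x 1 ^ 2) by (unfold dmonomials; simpl; ring).
  now apply sqnorm_ge_coord.
Qed.

Lemma sqnorm_dmonomials_le n x : 1 <= Rabs x ->
  sqnorm n (dmonomials x) <= INR n ^ 2 * sqnorm n (monomials x).
Proof.
  intros Hx; unfold sqnorm; rewrite scal_sum; apply sum_Rle; intros k Hk.
  unfold dmonomials, monomials; destruct k as [|k]; [simpl; nra|].
  replace (S k - 1)%nat with k by lia.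
  assert (INR (S k) <= INR n) by (apply le_INR; lia).
  assert (0 <= INR (S k)) by apply pos_INR.
  assert (Hpow : (x ^ k) ^ 2 <= (x ^ S k) ^ 2).
  { rewrite <- (pow2_abs (x ^ k)), <- (pow2_abs (x ^ S k)), <- !RPow_abs.
    change (Rabs x ^ S k) with (Rabs x * Rabs x ^ k).
    assert (0 <= Rabs x ^ k) by (apply pow_le, Rabs_pos).
    assert (0 <= (Rabs x ^ k) ^ 2 * (Rabs x * Rabs x - 1)) by (apply Rmult_le_pos; nra).
    nra. }
  assert (0 <= (x ^ k) ^ 2) by apply pow2_ge_0.
  rewrite Rpow_mult_distr, (Rmult_comm _ (INR n ^ 2)).
  apply Rmult_le_compat; [apply pow2_ge_0 | apply pow2_ge_0 | apply pow_incr; lra | exact Hpow].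
Qed.

(* AM-GM on the pairs x^(2k) + x^(2(n-k)) >= 2 |x|^n. *)
Lemma sqnorm_monomials_ge_pow n x : INR (S n) * Rabs x ^ n <= sqnorm n (monomials x).
Proof.
  unfold sqnorm.
  assert (Hpair : sum_f_R0 (fun _ => 2 * Rabs x ^ n) n
                  <= sum_f_R0 (fun k => monomials x k ^ 2 + monomials x (n - k)%nat ^ 2) n).
  { apply sum_Rle; intros k Hk; unfold monomials.
    assert (E : Rabs x ^ n = Rabs (x ^ k) * Rabs (x ^ (n - k))).
    { rewrite <- Rabs_mult, <- pow_add, RPow_abs; do 2 f_equal; lia. }
    rewrite E, <- (pow2_abs (x ^ k)), <- (pow2_abs (x ^ (n - k))).
    set (u := Rabs (x ^ k)); set (v := Rabs (x ^ (n - k))).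
    assert (Huv := pow2_ge_0 (u - v)).
    replace ((u - v) ^ 2) with (u ^ 2 + v ^ 2 - 2 * (u * v)) in Huv by ring; lra. }
  rewrite plus_sum, (sum_f_R0_rev (fun k => monomials x k ^ 2)), sum_cte in Hpair.
  lra.
Qed.

Lemma ex_RInt_gaussian a b : ex_RInt (fun t => exp (- t ^ 2)) a b.
Proof. apply (ex_RInt_continuous (V := R_CompleteNormedModule)); intros; solve_continuous. Qed.

Lemma erf_continuous u : continuous erf u.
Proof.
  unfold erf; apply continuous_Rmult; [apply continuous_const|].
  apply (continuous_RInt_1 (fun t => exp (- t ^ 2)) 0 u).
  apply filter_forall; intros z.
  apply (RInt_correct (V := R_CompleteNormedModule)), ex_RInt_gaussian.
Qed.

(* exp (t^2) >= 1 + t^2: the Gaussian is dominated by the Cauchy density, with primitive atan. *)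
Lemma RInt_gaussian_le_atan u : 0 <= u -> RInt (fun t => exp (- t ^ 2)) 0 u <= atan u.
Proof.
  intros Hu.
  assert (Hatan : is_RInt (fun t => / (1 + t ^ 2)) 0 u (minus (atan u) (atan 0))).
  { apply (is_RInt_derive (V := R_CompleteNormedModule)).
    - intros t _; apply is_derive_Reals, derivable_pt_lim_atan.
    - intros t _; apply continuous_Rinv_comp; [solve_continuous|].
      pose proof (pow2_ge_0 t); lra. }
  replace (minus (atan u) (atan 0)) with (atan u) in Hatan
    by (rewrite atan_0; unfold minus, plus, opp; simpl; ring).
  rewrite <- (is_RInt_unique _ _ _ _ Hatan).
  apply RInt_le; auto; [apply ex_RInt_gaussian | eexists; exact Hatan |].
  intros t _; rewrite exp_Ropp; apply Rinv_le_contravar; [pose proof (pow2_ge_0 t); lra|].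
  destruct (Req_dec (t ^ 2) 0) as [->|Ht]; [rewrite exp_0; lra|].
  left; apply exp_ineq1; exact Ht.
Qed.

Lemma erf_bounds u : 0 <= u -> 0 <= erf u <= sqrt PI.
Proof.
  intros Hu; pose proof PI_RGT_0.
  assert (HsPI : 0 < sqrt PI) by (apply sqrt_lt_R0; lra).
  assert (HsPI2 : sqrt PI * sqrt PI = PI) by (apply sqrt_sqrt; lra).
  assert (I0 : 0 <= RInt (fun t => exp (- t ^ 2)) 0 u)
    by (apply RInt_ge_0; auto; [apply ex_RInt_gaussian | intros; left; apply exp_pos]).
  assert (I1 := RInt_gaussian_le_atan u Hu).
  assert (atan u < PI / 2) by apply atan_bound.
  assert (Hc : 0 <= 2 / sqrt PI) by (unfold Rdiv; apply Rmult_le_pos; [lra|]; left;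
    apply Rinv_0_lt_compat; exact HsPI).
  unfold erf; split; [now apply Rmult_le_pos|].
  assert (E : 2 / sqrt PI * (PI / 2) = sqrt PI).
  { set (s := sqrt PI) in *; rewrite <- HsPI2; field; lra. }
  rewrite <- E at 2; apply Rmult_le_compat_l; lra.
Qed.

Lemma F2_le_ABC Gam n K x :
  let A := Afun Gam n x in let B := Bfun Gam n x in let C := Cfun Gam n x in
  0 < A -> 0 < A * C - B ^ 2 ->
  0 <= F2 Gam n K x <= sqrt 2 / sqrt PI * Rabs K * (Rabs B / (A * sqrt A)).
Proof.
  intros A B C HA HD; pose proof PI_RGT_0.
  assert (Hpow : Rpower A (3 / 2) = A * sqrt A).
  { replace (3 / 2) with (1 + / 2) by field.
    now rewrite Rpower_plus, Rpower_1, Rpower_sqrt. }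
  set (u := Rabs (B * K) / sqrt (2 * A * (A * C - B ^ 2))).
  assert (Hu : 0 <= u).
  { apply Rmult_le_pos; [apply Rabs_pos|].
    left; apply Rinv_0_lt_compat, sqrt_lt_R0; nra. }
  destruct (erf_bounds u Hu) as [E0 E1].
  set (e := exp (- K ^ 2 / (2 * A))).
  assert (He : 0 < e <= 1).
  { split; [apply exp_pos|].
    assert (0 <= K ^ 2 / (2 * A)) by (apply Rdiv_le_0_compat; [apply pow2_ge_0 | lra]).
    pose proof (exp_ineq1_le (K ^ 2 / (2 * A))).
    unfold e, Rdiv; rewrite Ropp_mult_distr_l_reverse, exp_Ropp, <- Rinv_1.
    apply Rinv_le_contravar; unfold Rdiv in *; lra. }
  assert (HsA : 0 < sqrt A) by (apply sqrt_lt_R0; exact HA).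
  assert (HsPI : 0 < sqrt PI) by (apply sqrt_lt_R0; lra).
  set (c := 1 / PI * (sqrt 2 * Rabs (B * K) / (A * sqrt A))).
  assert (Hc : 0 <= c).
  { apply Rmult_le_pos; [apply Rdiv_le_0_compat; lra|].
    apply Rdiv_le_0_compat; [apply Rmult_le_pos; [apply sqrt_pos | apply Rabs_pos] | nra]. }
  unfold F2; cbv zeta; fold A B C; rewrite Hpow; fold u e c.
  split; [apply Rmult_le_pos; [apply Rmult_le_pos|]; lra|].
  apply Rle_trans with (c * sqrt PI).
  - rewrite Rmult_assoc; apply Rmult_le_compat_l; [exact Hc|].
    rewrite <- (Rmult_1_l (sqrt PI)); apply Rmult_le_compat; lra.
  - right; unfold c; rewrite Rabs_mult, <- (sqrt_sqrt PI) at 1 by lra.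
    field; lra.
Qed.

Lemma abs_div_pow32_le (A B C S alpha beta nR X : R) :
  0 < alpha -> 0 <= beta -> 0 <= nR -> 0 < X ->
  alpha * S <= A -> C <= beta * nR ^ 2 * S -> B ^ 2 <= A * C -> (nR + 1) * X ^ 2 <= S ->
  Rabs B / (A * sqrt A) <= sqrt beta / alpha * (sqrt nR / X).
Proof.
  intros Ha Hb Hn HX HAS HCS HBAC HSX.
  assert (HX2 : 0 < X ^ 2) by (apply pow2_gt_0; lra).
  assert (HS : 0 < S) by nra.
  assert (HA : 0 < A) by nra.
  assert (HsA : 0 < sqrt A) by (apply sqrt_lt_R0; exact HA).
  assert (sA := sqrt_sqrt A (Rlt_le _ _ HA)).
  apply Rsqr_incr_0; unfold Rsqr.
  2:{ apply Rdiv_le_0_compat; [apply Rabs_pos | nra]. }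
  2:{ apply Rmult_le_pos; apply Rdiv_le_0_compat; try apply sqrt_pos; lra. }
  replace (Rabs B / (A * sqrt A) * (Rabs B / (A * sqrt A)))
    with (Rabs B ^ 2 / (A ^ 2 * (sqrt A * sqrt A))) by (field; lra).
  replace (sqrt beta / alpha * (sqrt nR / X) * (sqrt beta / alpha * (sqrt nR / X)))
    with (sqrt beta * sqrt beta * (sqrt nR * sqrt nR) / (alpha ^ 2 * X ^ 2)) by (field; lra).
  rewrite pow2_abs, sA, !sqrt_sqrt by lra.
  apply (Rmult_le_reg_r (A ^ 2 * A * (alpha ^ 2 * X ^ 2)));
    [apply Rmult_lt_0_compat; apply Rmult_lt_0_compat; nra|].
  replace (B ^ 2 / (A ^ 2 * A) * (A ^ 2 * A * (alpha ^ 2 * X ^ 2)))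
    with (B ^ 2 * (alpha ^ 2 * X ^ 2)) by (field; lra).
  replace (beta * nR / (alpha ^ 2 * X ^ 2) * (A ^ 2 * A * (alpha ^ 2 * X ^ 2)))
    with (beta * nR * A ^ 3) by (field; lra).
  assert (HaX : 0 <= alpha ^ 2 * X ^ 2) by nra.
  assert (h1 : B ^ 2 * (alpha ^ 2 * X ^ 2) <= A * C * (alpha ^ 2 * X ^ 2))
    by (apply Rmult_le_compat_r; assumption).
  assert (h2 : A * C * (alpha ^ 2 * X ^ 2) <= A * (beta * nR ^ 2 * S) * (alpha ^ 2 * X ^ 2))
    by (apply Rmult_le_compat_r; [|apply Rmult_le_compat_l]; lra).
  assert (h3 : alpha ^ 2 * S * (nR * X ^ 2) <= A ^ 2).
  { assert (nR * X ^ 2 <= S) by nra.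
    assert (0 <= (A - alpha * S) * (A + alpha * S)) by (apply Rmult_le_pos; nra).
    apply Rle_trans with (alpha ^ 2 * S * S); [apply Rmult_le_compat_l; nra | nra]. }
  assert (h4 : A * beta * nR * (alpha ^ 2 * S * (nR * X ^ 2)) <= A * beta * nR * A ^ 2)
    by (apply Rmult_le_compat_l; [apply Rmult_le_pos; [apply Rmult_le_pos|]|]; lra).
  lra.
Qed.

Definition tail_const (m M : R) := sqrt 2 / sqrt PI * (sqrt (2 * PI * M) / (2 * PI * m)).

Lemma tail_const_pos m M : 0 < m -> m <= M -> 0 < tail_const m M.
Proof.
  intros Hm HM; pose proof PI_RGT_0; unfold tail_const.
  assert (0 < 2 * PI * m) by (apply Rmult_lt_0_compat; lra).
  assert (0 < 2 * PI * M) by (apply Rmult_lt_0_compat; lra).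
  apply Rmult_lt_0_compat; apply Rdiv_lt_0_compat; try apply sqrt_lt_R0; lra.
Qed.

Lemma is_RInt_inv_pow D p b : 1 <= b ->
  is_RInt (fun x => D / x ^ (p + 2)) 1 b (D / INR (p + 1) * (1 - / b ^ (p + 1))).
Proof.
  intros Hb.
  assert (Hp : INR (p + 1) <> 0) by (apply not_0_INR; lia).
  replace (D / INR (p + 1) * (1 - / b ^ (p + 1))) with
    (minus (- D / (INR (p + 1) * b ^ (p + 1))) (- D / (INR (p + 1) * 1 ^ (p + 1)))).
  - apply (is_RInt_derive (V := R_CompleteNormedModule)
             (fun x => - D / (INR (p + 1) * x ^ (p + 1)))); intros x Hx;
      rewrite Rmin_left, Rmax_right in Hx by lra.
    + auto_derive; [apply Rmult_integral_contrapositive; split; [exact Hp|];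
                    apply pow_nonzero; lra|].
      replace (p + 1)%nat with (S p) by lia; replace (p + 2)%nat with (S (S p)) by lia.
      simpl pred; simpl pow; replace (S p) with (p + 1)%nat in * by lia.
      field; repeat split; first [exact Hp | apply pow_nonzero; lra | apply Rgt_not_eq; lra].
    + apply continuous_Rdiv; [apply continuous_const | solve_continuous |].
      apply pow_nonzero; lra.
  - rewrite pow1; unfold minus, plus, opp; simpl; field.
    split; [apply pow_nonzero; lra | exact Hp].
Qed.

Lemma is_lim_nondecreasing_bounded (Phi : R -> R) c :
  (forall b b', 1 <= b <= b' -> Phi b <= Phi b') -> (forall b, 1 <= b -> Phi b <= c) ->
  exists I, Phi 1 <= I <= c /\ is_lim Phi p_infty I.
Proof.
  intros Hmono Hbound.
  set (E := fun y => exists b, 1 <= b /\ y = Phi b).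
  destruct (completeness E) as [I [Iub Ilub]].
  - exists c; intros y [b [Hb ->]]; auto.
  - exists (Phi 1), 1; split; [lra | reflexivity].
  - exists I; split; [split|].
    + apply Iub; exists 1; split; [lra | reflexivity].
    + apply Ilub; intros y [b [Hb ->]]; auto.
    + apply is_lim_spec; intros eps.
      destruct (classic (exists b0, 1 <= b0 /\ I - eps < Phi b0)) as [[b0 [Hb0 Hlt]]|Hnot].
      * exists b0; intros b Hb.
        assert (Phi b0 <= Phi b) by (apply Hmono; lra).
        assert (Phi b <= I) by (apply Iub; exists b; split; [lra | reflexivity]).
        rewrite Rabs_left1; pose proof (cond_pos eps); lra.
      * exfalso; assert (I <= I - eps) by
          (apply Ilub; intros y [b [Hb ->]]; apply Rnot_lt_le; intro; apply Hnot; eauto).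
        pose proof (cond_pos eps); lra.
Qed.

Lemma is_lim_RInt_dominated_inv_pow (G : R -> R) D p :
  (forall x, continuous G x) -> (forall x, 1 <= x -> 0 <= G x <= D / x ^ (p + 2)) ->
  exists I, 0 <= I <= D / INR (p + 1) /\ is_lim (fun b => RInt G 1 b) p_infty I.
Proof.
  intros Hc Hb.
  assert (HG : forall a b, ex_RInt G a b)
    by (intros; apply (ex_RInt_continuous (V := R_CompleteNormedModule)); auto).
  destruct (is_lim_nondecreasing_bounded (fun b => RInt G 1 b) (D / INR (p + 1)))
    as [I [[HI0 HI1] Hlim]].
  - intros b b' Hbb'.
    rewrite <- (RInt_Chasles (V := R_CompleteNormedModule) G 1 b b') by auto.
    assert (0 <= RInt G b b') by (apply RInt_ge_0; [lra | auto | intros x Hx; apply Hb; lra]).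
    simpl; unfold plus; simpl; lra.
  - intros b Hb1; assert (Hi := is_RInt_inv_pow D p b Hb1).
    assert (Hpos : 0 < / b ^ (p + 1)) by (apply Rinv_0_lt_compat, pow_lt; lra).
    assert (HD : 0 <= D / INR (p + 1)).
    { destruct (Hb 1) as [H0 H1]; [lra|]; rewrite pow1 in H1.
      apply Rdiv_le_0_compat; [lra | apply lt_0_INR; lia]. }
    apply Rle_trans with (D / INR (p + 1) * (1 - / b ^ (p + 1))); [|nra].
    rewrite <- (is_RInt_unique _ _ _ _ Hi).
    apply RInt_le; auto; [eexists; exact Hi | intros x Hx; apply Hb; lra].
  - rewrite RInt_point in HI0; exists I; auto.
Qed.

Lemma is_RInt_gen_at_point_pinfty (G : R -> R) (a I : R) :
  (forall x, continuous G x) -> is_lim (fun b => RInt G a b) p_infty I ->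
  is_RInt_gen G (at_point a) (Rbar_locally p_infty) I.
Proof.
  intros Hc Hlim P [eps HP].
  apply is_lim_spec in Hlim; destruct (Hlim eps) as [b0 Hb0].
  apply (Filter_prod _ _ _ (fun x => x = a) (fun b => b0 < b)); [reflexivity | exists b0; auto|].
  intros x b -> Hb; exists (RInt G a b); split.
  - apply (RInt_correct (V := R_CompleteNormedModule)).
    apply (ex_RInt_continuous (V := R_CompleteNormedModule)); auto.
  - apply HP, Hb0, Hb.
Qed.

Lemma is_RInt_gen_minfty_at_point (G : R -> R) (a I : R) :
  (forall x, continuous G x) -> is_lim (fun b => RInt (fun y => G (- y)) a b) p_infty I ->
  is_RInt_gen G (Rbar_locally m_infty) (at_point (- a)) I.
Proof.
  intros Hc Hlim P [eps HP].
  apply is_lim_spec in Hlim; destruct (Hlim eps) as [b0 Hb0].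
  apply (Filter_prod _ _ _ (fun x => x < - b0) (fun b => b = - a));
    [exists (- b0); auto | reflexivity|].
  intros x b Hx ->; exists (RInt (fun y => G (- y)) a (- x)); split.
  - assert (Hopp : is_RInt (fun y => G (- y)) (- - a) (- x)
                            (RInt (fun y => G (- y)) a (- x))).
    { rewrite Ropp_involutive; apply (RInt_correct (V := R_CompleteNormedModule)).
      apply (ex_RInt_continuous (V := R_CompleteNormedModule)); intros z _.
      apply (continuous_comp (fun y => - y) G); [apply continuous_Ropp, continuous_id | auto]. }
    apply is_RInt_comp_opp, is_RInt_swap, is_RInt_opp in Hopp.
    rewrite opp_opp in Hopp; eapply is_RInt_ext; [|exact Hopp].
    intros z _; unfold opp; simpl; rewrite !Ropp_involutive; reflexivity.
  - apply HP, Hb0; lra.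
Qed.

Lemma tail_integral_arith c e n q K :
  0 <= c -> 0 <= e -> (6 <= n)%nat -> (n <= 2 * q + 1)%nat -> Rabs K <= e * sqrt (INR n) ->
  c * Rabs K * sqrt (INR n) / INR (q - 2 + 1) <= 4 * c * e.
Proof.
  intros Hc He Hn Hq HK.
  assert (Hq1 : INR (q - 2 + 1) = INR q - 1)
    by (rewrite plus_INR, minus_INR by lia; simpl; ring).
  assert (Hnq : 6 <= INR n <= 2 * INR q + 1).
  { split; [replace 6 with (INR 6) by (simpl; ring); apply le_INR; lia|].
    replace (2 * INR q + 1) with (INR (2 * q + 1)) by (rewrite plus_INR, mult_INR; simpl; ring).
    apply le_INR; lia. }
  assert (Hsn : sqrt (INR n) * sqrt (INR n) = INR n) by (apply sqrt_sqrt; lra).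
  assert (HKn : Rabs K * sqrt (INR n) <= e * INR n).
  { replace (e * INR n) with (e * sqrt (INR n) * sqrt (INR n))
      by (rewrite Rmult_assoc, Hsn; ring).
    apply Rmult_le_compat_r; [apply sqrt_pos | exact HK]. }
  rewrite Hq1; apply Rle_div_l; [lra|].
  assert (0 <= c * e) by (apply Rmult_le_pos; lra).
  apply Rle_trans with (c * (e * INR n)); [rewrite Rmult_assoc; apply Rmult_le_compat_l; lra|].
  nra.
Qed.

Section SpectralBounds.

Variables (Gam : Z -> R) (g : R -> R) (m M : R).
Hypothesis g_continuous : forall x, continuous g x.
Hypothesis Gam_RInt_cos : forall z, Gam z = RInt (fun p => cos (IZR z * p) * g p) (-PI) PI.
Hypothesis g_bounds : forall p, -PI <= p <= PI -> m <= g p <= M.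

Lemma toeplitz_form_RInt n a b :
  toeplitz_form Gam n a b
  = RInt (fun p => (cos_poly n a p * cos_poly n b p + sin_poly n a p * sin_poly n b p) * g p)
      (-PI) PI.
Proof.
  rewrite <- RInt_double_sum_cos_diff by exact g_continuous.
  apply sum_eq; intros k _; apply sum_eq; intros j _.
  rewrite Gam_RInt_cos, minus_IZR, <- !INR_IZR_INZ; ring.
Qed.

Lemma toeplitz_form_sym n a b : toeplitz_form Gam n a b = toeplitz_form Gam n b a.
Proof. rewrite !toeplitz_form_RInt; apply RInt_ext; intros; simpl; ring. Qed.

Lemma toeplitz_form_bounds n a :
  2 * PI * m * sqnorm n a <= toeplitz_form Gam n a a <= 2 * PI * M * sqnorm n a.
Proof.
  set (E := fun p => cos_poly n a p * cos_poly n a p + sin_poly n a p * sin_poly n a p).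
  assert (E_continuous : forall x, continuous E x)
    by (intros; unfold E, cos_poly, sin_poly; solve_continuous).
  assert (HE : RInt E (-PI) PI = 2 * PI * sqnorm n a) by apply RInt_trig_poly_sq.
  rewrite toeplitz_form_RInt; fold E.
  replace (2 * PI * m * sqnorm n a) with (m * RInt E (-PI) PI) by (rewrite HE; ring).
  replace (2 * PI * M * sqnorm n a) with (M * RInt E (-PI) PI) by (rewrite HE; ring).
  apply RInt_mul_weight_bounds.
  - pose proof PI_RGT_0; lra.
  - apply (ex_RInt_continuous (V := R_CompleteNormedModule)); auto.
  - apply (ex_RInt_continuous (V := R_CompleteNormedModule)); intros.
    now apply continuous_Rmult.
  - intros p Hp; split; [unfold E; nra | auto].
Qed.

Hypothesis m_pos : 0 < m.

Lemma toeplitz_form_pos n a : 0 < sqnorm n a -> 0 < toeplitz_form Gam n a a.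
Proof.
  intros Ha; pose proof PI_RGT_0.
  assert (0 < 2 * PI * m * sqnorm n a) by (apply Rmult_lt_0_compat; nra).
  pose proof (toeplitz_form_bounds n a); lra.
Qed.

(* The k-th coordinate keeps a - t b away from 0, which makes the inequality strict. *)
Lemma toeplitz_form_cauchy_schwarz n a b k : (k <= n)%nat -> a k <> 0 -> b k = 0 ->
  0 < sqnorm n b ->
  toeplitz_form Gam n a b ^ 2 < toeplitz_form Gam n a a * toeplitz_form Gam n b b.
Proof.
  intros Hk Ha Hb Hsb.
  set (A := toeplitz_form Gam n a a); set (B := toeplitz_form Gam n a b);
  set (C := toeplitz_form Gam n b b).
  assert (HC : 0 < C) by now apply toeplitz_form_pos.
  set (t := B / C).
  assert (Hpos : 0 < toeplitz_form Gam n (fun i => a i - t * b i) (fun i => a i - t * b i)).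
  { apply toeplitz_form_pos; unfold sqnorm.
    eapply Rlt_le_trans; [|apply (sum_f_R0_ge_term _ n k); auto; intros; apply pow2_ge_0].
    cbv beta; rewrite Hb, Rmult_0_r, Rminus_0_r; now apply pow2_gt_0. }
  rewrite toeplitz_form_sub_scal_l, !toeplitz_form_sub_scal_r in Hpos.
  rewrite (toeplitz_form_sym n b a) in Hpos; fold A B C in Hpos.
  replace (A - t * B - t * (B - t * C)) with ((A * C - B ^ 2) / C) in Hpos
    by (unfold t; field; lra).
  apply Rdiv_pos_cases in Hpos; lra.
Qed.

Lemma Afun_ge n x : 2 * PI * m * sqnorm n (monomials x) <= Afun Gam n x.
Proof. rewrite Afun_toeplitz; apply toeplitz_form_bounds. Qed.

Lemma Cfun_le n x : Cfun Gam n x <= 2 * PI * M * sqnorm n (dmonomials x).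
Proof. rewrite Cfun_toeplitz; apply toeplitz_form_bounds. Qed.

Lemma Afun_pos n x : 0 < Afun Gam n x.
Proof.
  rewrite Afun_toeplitz; apply toeplitz_form_pos.
  pose proof (sqnorm_monomials_ge_1 n x); lra.
Qed.

Lemma Bfun_sq_lt n x : (1 <= n)%nat -> Bfun Gam n x ^ 2 < Afun Gam n x * Cfun Gam n x.
Proof.
  intros Hn; rewrite Afun_toeplitz, Bfun_toeplitz, Cfun_toeplitz, toeplitz_form_sym.
  apply (toeplitz_form_cauchy_schwarz n _ _ 0).
  - lia.
  - unfold monomials; simpl; lra.
  - unfold dmonomials; simpl; ring.
  - pose proof (sqnorm_dmonomials_ge_1 n x Hn); lra.
Qed.

Lemma F2_continuous n K x : (1 <= n)%nat -> continuous (F2 Gam n K) x.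
Proof.
  intros Hn; assert (HA := Afun_pos n x); assert (HD := Bfun_sq_lt n x Hn).
  assert (cA : continuous (Afun Gam n) x) by (unfold Afun; solve_continuous).
  assert (cB : continuous (Bfun Gam n) x) by (unfold Bfun; solve_continuous).
  assert (cC : continuous (Cfun Gam n) x) by (unfold Cfun; solve_continuous).
  unfold F2, Rpower; cbv zeta; solve_continuous; try assumption.
  - apply (continuous_comp (Afun Gam n) ln); [exact cA | now apply continuous_ln].
  - apply Rgt_not_eq, exp_pos.
  - lra.
  - apply (continuous_comp _ erf); [|apply erf_continuous].
    solve_continuous; try assumption.
    apply Rgt_not_eq, sqrt_lt_R0; nra.
Qed.

Lemma F2_le_inv_pow n q K x : (1 <= n)%nat -> (2 * q <= n)%nat -> 1 <= Rabs x ->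
  0 <= F2 Gam n K x <= tail_const m M * Rabs K * sqrt (INR n) / Rabs x ^ q.
Proof.
  intros Hn Hq Hx; pose proof PI_RGT_0.
  assert (HmM : m <= M) by (destruct (g_bounds 0); lra).
  assert (HBAC := Bfun_sq_lt n x Hn).
  destruct (F2_le_ABC Gam n K x (Afun_pos n x)) as [H0 H1]; [lra|].
  split; [exact H0|]; eapply Rle_trans; [exact H1|].
  set (S := sqnorm n (monomials x)).
  assert (HX : 1 <= Rabs x ^ q) by (apply pow_R1_Rle; lra).
  assert (HC : Cfun Gam n x <= 2 * PI * M * INR n ^ 2 * S).
  { eapply Rle_trans; [apply Cfun_le|].
    replace (2 * PI * M * INR n ^ 2 * S) with (2 * PI * M * (INR n ^ 2 * S)) by ring.
    apply Rmult_le_compat_l; [nra | now apply sqnorm_dmonomials_le]. }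
  assert (HSX : (INR n + 1) * (Rabs x ^ q) ^ 2 <= S).
  { rewrite <- S_INR, <- pow_mult; eapply Rle_trans; [|apply sqnorm_monomials_ge_pow].
    apply Rmult_le_compat_l; [apply pos_INR|]; apply Rle_pow; lra || lia. }
  assert (Hm2 : 0 < 2 * PI * m) by (apply Rmult_lt_0_compat; lra).
  assert (HM2 : 0 <= 2 * PI * M) by (apply Rmult_le_pos; lra).
  assert (Hratio := abs_div_pow32_le (Afun Gam n x) (Bfun Gam n x) (Cfun Gam n x) S
    (2 * PI * m) (2 * PI * M) (INR n) (Rabs x ^ q)
    Hm2 HM2 (pos_INR n) ltac:(lra) (Afun_ge n x) HC ltac:(lra) HSX).
  replace (tail_const m M * Rabs K * sqrt (INR n) / Rabs x ^ q)
    with (sqrt 2 / sqrt PI * Rabs K * (sqrt (2 * PI * M) / (2 * PI * m)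
                                         * (sqrt (INR n) / Rabs x ^ q)))
    by (unfold tail_const, Rdiv; ring).
  apply Rmult_le_compat_l; [|exact Hratio].
  apply Rmult_le_pos; [|apply Rabs_pos].
  apply Rdiv_le_0_compat; [apply sqrt_pos | apply sqrt_lt_R0; lra].
Qed.

Lemma F2_tail_integrals_le n K e : (6 <= n)%nat -> 0 <= e -> Rabs K <= e * sqrt (INR n) ->
  (exists I, is_RInt_gen (F2 Gam n K) (at_point 1) (Rbar_locally p_infty) I
             /\ Rabs I <= 4 * tail_const m M * e) /\
  (exists I, is_RInt_gen (F2 Gam n K) (Rbar_locally m_infty) (at_point (-1)) I
             /\ Rabs I <= 4 * tail_const m M * e).
Proof.
  intros Hn He HK; pose proof PI_RGT_0.
  assert (Hc : 0 <= tail_const m M)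
    by (apply Rlt_le, tail_const_pos; [|destruct (g_bounds 0)]; lra).
  set (q := (n / 2)%nat).
  assert (Hq : (2 * q <= n <= 2 * q + 1)%nat).
  { pose proof (Nat.div_mod n 2 ltac:(lia)); pose proof (Nat.mod_upper_bound n 2 ltac:(lia)).
    unfold q; lia. }
  set (D := tail_const m M * Rabs K * sqrt (INR n)).
  assert (HD : D / INR (q - 2 + 1) <= 4 * tail_const m M * e)
    by (apply tail_integral_arith; tauto).
  replace q with (q - 2 + 2)%nat in Hq by lia.
  assert (Hcont : forall x, continuous (F2 Gam n K) x) by (intros; apply F2_continuous; lia).
  assert (Hbound : forall x, 1 <= Rabs x -> 0 <= F2 Gam n K x <= D / Rabs x ^ (q - 2 + 2))
    by (intros; apply F2_le_inv_pow; lia || assumption).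
  split.
  - destruct (is_lim_RInt_dominated_inv_pow (F2 Gam n K) D (q - 2)) as [I [HI Hlim]].
    + exact Hcont.
    + intros x Hx; specialize (Hbound x); rewrite Rabs_pos_eq in Hbound by lra.
      apply Hbound; lra.
    + exists I; split; [now apply is_RInt_gen_at_point_pinfty|].
      rewrite Rabs_pos_eq; lra.
  - destruct (is_lim_RInt_dominated_inv_pow (fun y => F2 Gam n K (- y)) D (q - 2))
      as [I [HI Hlim]].
    + intros x; apply (continuous_comp (fun y => - y)); [apply continuous_Ropp, continuous_id|].
      apply Hcont.
    + intros x Hx; specialize (Hbound (- x)); rewrite Rabs_Ropp, Rabs_pos_eq in Hbound by lra.
      apply Hbound; lra.
    + exists I; split; [now apply is_RInt_gen_minfty_at_point|].
      rewrite Rabs_pos_eq; lra.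
Qed.

End SpectralBounds.

(* min (PI, y) and then max (-PI, .), written with Rabs so that continuity is immediate *)
Definition clamp (y : R) : R :=
  let z := (PI + y - Rabs (PI - y)) / 2 in (z - PI + Rabs (z + PI)) / 2.

Lemma clamp_bounds y : -PI <= clamp y <= PI.
Proof.
  pose proof PI_RGT_0; unfold clamp; cbv zeta.
  set (z := (PI + y - Rabs (PI - y)) / 2).
  assert (z <= PI) by (unfold z, Rabs; destruct Rcase_abs; lra).
  unfold Rabs; destruct Rcase_abs; lra.
Qed.

Lemma clamp_id y : -PI <= y <= PI -> clamp y = y.
Proof.
  intros Hy; unfold clamp; cbv zeta.
  rewrite (Rabs_right (PI - y)) by lra.
  replace ((PI + y - (PI - y)) / 2) with y by field.
  rewrite Rabs_right by lra; field.
Qed.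

Lemma clamp_continuous y : continuous clamp y.
Proof. unfold clamp; cbv zeta; solve_continuous; apply Rgt_not_eq; lra. Qed.

Lemma interval_continuous_extension (f : R -> R) :
  (forall phi, -PI <= phi <= PI ->
     filterlim f (within (fun y => -PI <= y <= PI) (locally phi)) (locally (f phi))) ->
  (forall phi, -PI <= phi <= PI -> 0 < f phi) ->
  exists g m M, (forall x, continuous g x) /\ (forall p, -PI <= p <= PI -> g p = f p) /\
    0 < m /\ (forall p, -PI <= p <= PI -> m <= g p <= M).
Proof.
  intros Hf_cont Hf_pos; pose proof PI_RGT_0.
  set (g := fun y => f (clamp y)).
  assert (Hg : forall x, continuous g x).
  { intros x; unfold g, continuous; eapply filterlim_comp; [|apply Hf_cont, clamp_bounds].
    intros P HP; apply clamp_continuous in HP; unfold filtermap in *.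
    eapply filter_imp; [|exact HP]; intros y Hy; apply Hy, clamp_bounds. }
  assert (Hpt : forall c, -PI <= c <= PI -> continuity_pt g c)
    by (intros; apply continuity_pt_filterlim, Hg).
  destruct (continuity_ab_min g (-PI) PI ltac:(lra) Hpt) as [xm [Hxm _]].
  destruct (continuity_ab_maj g (-PI) PI ltac:(lra) Hpt) as [xM [HxM _]].
  exists g, (g xm), (g xM); split; [exact Hg|]; split; [|split].
  - intros p Hp; unfold g; now rewrite clamp_id.
  - apply Hf_pos, clamp_bounds.
  - intros p Hp; split; auto.
Qed.

Lemma sqrt_div_lnln_le n : (27 <= n)%nat -> sqrt (INR n / ln (ln (INR n))) <= sqrt (INR n).
Proof.
  intros Hn.
  assert (H27 : 27 <= INR n) by (replace 27 with (INR 27) by (simpl; ring); apply le_INR, Hn).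
  assert (Hee : exp (exp 1) <= 27).
  { pose proof exp_le_3; apply Rle_trans with (exp 3).
    - destruct (Req_dec (exp 1) 3) as [->|]; [lra|]; left; apply exp_increasing; lra.
    - replace 3 with (1 + 1 + 1) by ring; rewrite !exp_plus.
      assert (0 < exp 1) by apply exp_pos; nra. }
  assert (Hlnln : 1 <= ln (ln (INR n))).
  { rewrite <- (ln_exp 1); apply ln_le; [apply exp_pos|].
    rewrite <- (ln_exp (exp 1)); apply ln_le; [apply exp_pos | lra]. }
  apply sqrt_le_1_alt; unfold Rdiv.
  apply Rle_trans with (INR n * 1); [apply Rmult_le_compat_l; [lra|] | lra].
  rewrite <- Rinv_1; apply Rinv_le_contravar; lra.
Qed.

Theorem lemma3p1
  (f : R -> R) (Gam : Z -> R) (K : nat -> R)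
  (hf_cont : forall phi, -PI <= phi <= PI ->
     filterlim f (within (fun y => -PI <= y <= PI) (locally phi)) (locally (f phi)))
  (hf_pos : forall phi, -PI <= phi <= PI -> 0 < f phi)
  (hGam : forall k : Z,
     Gam k = RInt (fun phi => cos (IZR k * phi) * f phi) (- PI) PI)
  (hGam_real : forall k : Z,
     RInt (fun phi => sin (IZR k * phi) * f phi) (- PI) PI = 0)
  (hGam0 : Gam 0%Z = 1)
  (hK : forall eps : R, 0 < eps -> exists N : nat, forall n : nat, (N <= n)%nat ->
     Rabs (K n) <= eps * sqrt (INR n / ln (ln (INR n)))) :
  (forall eps : R, 0 < eps -> exists N : nat, forall n : nat, (N <= n)%nat ->
     exists I : R,
       is_RInt_gen (F2 Gam n (K n)) (at_point 1) (Rbar_locally p_infty) I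
       /\ Rabs I <= eps)
  /\
  (forall eps : R, 0 < eps -> exists N : nat, forall n : nat, (N <= n)%nat ->
     exists I : R,
       is_RInt_gen (F2 Gam n (K n)) (Rbar_locally m_infty) (at_point (-1)) I
       /\ Rabs I <= eps).
Proof.
  destruct (interval_continuous_extension f hf_cont hf_pos)
    as (g & m & M & Hg & Hgf & Hm & Hb).
  assert (HG : forall z, Gam z = RInt (fun p => cos (IZR z * p) * g p) (-PI) PI).
  { intros z; rewrite hGam; apply RInt_ext; intros p Hp.
    pose proof PI_RGT_0; rewrite Rmin_left, Rmax_right in Hp by lra.
    rewrite Hgf by lra; reflexivity. }
  set (c := 4 * tail_const m M).
  assert (Hc : 0 < c).
  { pose proof PI_RGT_0; destruct (Hb 0) as [Hm0 HM0]; [lra|].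
    unfold c; apply Rmult_lt_0_compat, tail_const_pos; lra. }
  assert (Hsmall : forall eps, 0 < eps -> exists N, forall n, (N <= n)%nat ->
    (exists I, is_RInt_gen (F2 Gam n (K n)) (at_point 1) (Rbar_locally p_infty) I
               /\ Rabs I <= eps) /\
    (exists I, is_RInt_gen (F2 Gam n (K n)) (Rbar_locally m_infty) (at_point (-1)) I
               /\ Rabs I <= eps)).
  { intros eps Heps.
    assert (He : 0 < eps / c) by (apply Rdiv_lt_0_compat; assumption).
    destruct (hK _ He) as [N HN]; exists (Nat.max N 27); intros n Hn.
    replace eps with (4 * tail_const m M * (eps / c))
      by (unfold c in *; field; apply Rgt_not_eq; lra).
    apply (F2_tail_integrals_le Gam g m M); auto; [lia | lra|].
    eapply Rle_trans; [apply HN; lia|].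
    apply Rmult_le_compat_l; [lra | apply sqrt_div_lnln_le; lia]. }
  split; intros eps Heps; destruct (Hsmall eps Heps) as [N HN]; exists N; intros n Hn;
    apply (HN n Hn).
Qed.
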